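(* Let $\lambda,\mu\in\mathbb{C}^*$, $\alpha,\beta\in\mathbb{C}$ and $t,t'\in\{1,-1\}$. Then: (i) $\Pi(\mathcal{N}_t(\lambda,\alpha))\not\cong\mathcal{N}_{t'}(\mu',\beta')$ for any $\mu'\in\mathbb{C}^*$, $\beta'\in\mathbb{C}$; (ii) $\mathcal{N}_t(\lambda,\alpha)\cong\mathcal{N}_{t'}(\mu,\beta)$ if and only if $\lambda=\mu$, $\alpha=\beta$ and $t=t'$.
   Context: The twisted $N=2$ superconformal algebra $\mathcal{T}$ is the Lie superalgebra over $\mathbb{C}$ with basis $\{L_m, I_r, G_p\mid m\in\mathbb{Z}, r\in\frac12+\mathbb{Z}, p\in\frac12\mathbb{Z}\}$, even part spanned by the $L_m,I_r$, odd part by the $G_p$, only nonzero brackets $[L_m,L_n]=(m-n)L_{m+n}$, $[L_m,I_r]=-rI_{m+r}$, $[L_m,G_p]=(\frac m2-p)G_{m+p}$, $[I_r,G_p]=G_{r+p}$, $[G_p,G_q]=(-1)^{2p}2L_{p+q}$ if $p+q\in\mathbb{Z}$, $[G_p,G_q]=(-1)^{2p+1}(p-q)I_{p+q}$ if $p+q\in\frac12+\mathbb{Z}$. Modules are $\mathbb{Z}_2$-graded and isomorphisms preserve parity; $\Pi$ is the parity-change functor. For $p\in\frac12\mathbb{Z}$, $\lambda^p$ means $(\lambda^{1/2})^{2p}$ for a fixed square root (likewise for $\mu$). For $\lambda\in\mathbb{C}^*,\alpha\in\mathbb{C},t=\pm1$, $\mathcal{N}_t(\lambda,\alpha)$ is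 the space $\mathbb{C}[x]\mathbf{1}_{\bar0}\oplus\mathbb{C}[y]\mathbf{1}_{\bar1}$ (even part $\mathbb{C}[x]\mathbf{1}_{\bar0}$, odd part $\mathbb{C}[y]\mathbf{1}_{\bar1}$; write $f(x)$ for $f(x)\mathbf{1}_{\bar0}$, $g(y)$ for $g(y)\mathbf{1}_{\bar1}$) with $L_mf(x)=\lambda^m(x+m\alpha)f(x+m)$, $L_mg(y)=\lambda^m(y+m(\alpha+\frac12))g(y+m)$, $I_rf(x)=-2t^{2r}\lambda^r\alpha f(x+r)$, $I_rg(y)=t^{2r}\lambda^r(1-2\alpha)g(y+r)$, $G_pf(x)=t^{2p}\lambda^pf(y+p)$, $G_pg(y)=(-t)^{2p}\lambda^p(x+2p\alpha)g(x+p)$, for $m\in\mathbb{Z}$, $r\in\frac12+\mathbb{Z}$, $p\in\frac12\mathbb{Z}$. *)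

From HB Require Import structures.
From mathcomp Require Import all_boot all_order all_algebra.
From mathcomp Require Import complex.
From mathcomp Require Import reals.
Set Implicit Arguments. Unset Strict Implicit. Unset Printing Implicit Defensive.
Import Order.TTheory GRing.Theory Num.Theory.
Local Open Scope ring_scope.

(* Basis of the twisted N=2 superconformal algebra T:
   TL m = L_m (m in Z); TI k = I_(k + 1/2) (k in Z); TG n = G_(n/2) (n in Z). *)
Inductive Tbasis := TL of int | TI of int | TG of int.

Record TMod (K : fieldType) := {
  M0 : lmodType K;
  M1 : lmodType K;
  act : Tbasis -> (M0 * M1)%type -> (M0 * M1)%type }.

Definition Pi (K : fieldType) (M : TMod K) : TMod K :=
  {| M0 := M1 M; M1 := M0 M;
     act := fun b v => let w := @act _ M b (v.2, v.1) in (w.2, w.1) |}.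

Definition TIso (K : fieldType) (M N : TMod K) : Prop :=
  exists (f0 : {linear M0 M -> M0 N}) (f1 : {linear M1 M -> M1 N}),
    [/\ bijective f0, bijective f1 &
      forall b v, (f0 (@act _ M b v).1, f1 (@act _ M b v).2) = @act _ N b (f0 v.1, f1 v.2)].

Section Nmodule.
Variable R : realType.
Local Notation C := R[i].

Definition shift (c : C) (f : {poly C}) : {poly C} := f \Po ('X + c%:P).
Definition halfz (n : int) : C := n%:~R / 2.

(* The action on N_t(lam, al) = C[x]1_0 (+) C[y]1_1, with lam^(p) := s^(2p),
   s := sq lam the fixed square root of lam. *)
Definition Nact (sq : C -> C) (t lam al : C) (b : Tbasis)
    (v : {poly C} * {poly C}) : {poly C} * {poly C} :=
  let s := sq lam in
  match b with
  | TL m =>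
      (s ^ (2 * m) *: (('X + (m%:~R * al)%:P) * shift m%:~R v.1),
       s ^ (2 * m) *: (('X + (m%:~R * (al + 2^-1))%:P) * shift m%:~R v.2))
  | TI k =>
      let n := 2 * k + 1 in
      ((- 2 * t ^ n * s ^ n * al) *: shift (halfz n) v.1,
       (t ^ n * s ^ n * (1 - 2 * al)) *: shift (halfz n) v.2)
  | TG n =>
      (((- t) ^ n * s ^ n) *: (('X + (n%:~R * al)%:P) * shift (halfz n) v.2),
       (t ^ n * s ^ n) *: shift (halfz n) v.1)
  end.

Definition Nmod (sq : C -> C) (t lam al : C) : TMod C :=
  {| M0 := {poly C}; M1 := {poly C}; act := Nact sq t lam al |}.

End Nmodule.

From HB Require Import structures.
From mathcomp Require Import all_boot all_order all_algebra.
From mathcomp Require Import complex.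
From mathcomp Require Import reals.
Import Order.TTheory GRing.Theory Num.Theory.
Local Open Scope ring_scope.

(* In N_t(lam, al) the operator G_0 sends f(x) to f(y) and g(y) to x g(x); in
   the parity-changed module the two formulas trade places, so there G_0 maps
   the even part only onto x C[x] instead of onto all of the odd part, which
   rules out (i).  For (ii), commuting with G_0 forces an isomorphism to be the
   same map on both parts and to commute with multiplication by x, hence to be
   multiplication by a nonzero constant.  Isomorphic modules thus carry the
   same action, and G_(1/2) applied to 1 and to 1_1 reads off t lam^(1/2) and
   al, which determine lam, al and t since t^2 = 1. *)

Lemma TIso_refl (K : fieldType) (M : TMod K) : TIso M M.
Proof.
exists idfun, idfun; split; try by exists idfun.
by move=> b [x y] /=; case: (@act _ M b (x, y)).
Qed.

Lemma mulX_neq1 {R : nzRingType} (p : {poly R}) : 'X * p != 1.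
Proof.
apply/eqP => /(congr1 (fun q : {poly R} => q`_0)).
by rewrite coefXM coef1 => /eqP; rewrite eq_sym oner_eq0.
Qed.

Lemma linear_commX_mul1 {R : comNzRingType} {f : {linear {poly R} -> {poly R}}} :
  (forall q, f ('X * q) = 'X * f q) -> forall p, f p = p * f 1.
Proof.
move=> fX; elim/poly_ind => [|p c IHp]; first by rewrite linear0 mul0r.
rewrite linearD mulrC fX IHp -alg_polyC linearZZ.
by rewrite mulrDl alg_polyC mul_polyC mulrA (mulrC 'X).
Qed.

Lemma sign_sqr {R : pzRingType} {t : R} : t = 1 \/ t = -1 -> t ^+ 2 = 1.
Proof. by case=> ->; rewrite ?sqrrN expr1n. Qed.

Section Nmodule.
Context {R : realType}.
Local Notation C := R[i].
Context {sq : C -> C}.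

Lemma shift0 (p : {poly C}) : shift 0 p = p.
Proof. by rewrite /shift addr0 comp_polyXr. Qed.

Lemma shift1 (h : C) : shift h 1 = 1.
Proof. by rewrite -polyC1 /shift comp_polyC. Qed.

Lemma shiftZ (h k : C) (p : {poly C}) : shift h (k *: p) = k *: shift h p.
Proof. by rewrite /shift comp_polyZ. Qed.

Lemma NactG0 (t lam al : C) (p q : {poly C}) :
  Nact sq t lam al (TG 0) (p, q) = ('X * q, p).
Proof.
by rewrite /Nact /halfz !expr0z mulr1 !scale1r mulr0z !mul0r polyC0 addr0 !shift0.
Qed.

Lemma NactG1 (t lam al : C) (p q : {poly C}) :
  Nact sq t lam al (TG 1) (p, q) =
  ((- (t * sq lam)) *: (('X + al%:P) * shift (halfz R 1) q),
   (t * sq lam) *: shift (halfz R 1) p).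
Proof. by rewrite /Nact !expr1z mulNr mul1r. Qed.

Lemma NactZ (t lam al k : C) b (p q : {poly C}) :
  Nact sq t lam al b (k *: p, k *: q) =
  (k *: (Nact sq t lam al b (p, q)).1, k *: (Nact sq t lam al b (p, q)).2).
Proof.
by case: b => n; rewrite /Nact /= !shiftZ -?scalerAr !scalerA ?(mulrC k).
Qed.

Lemma Pi_Nmod_not_iso (t lam al t' mu be : C) :
  ~ TIso (Pi (Nmod sq t lam al)) (Nmod sq t' mu be).
Proof.
move=> [f0 [f1 [[g0 _ f0K] f1_bij H]]].
have f1X u : f1 ('X * u) = f0 u.
  by have := H (TG 0) (u, 0); cbn [act Pi Nmod fst snd]; rewrite !NactG0; case.
have := f1X (g0 (f1 1)); rewrite f0K => /(bij_inj f1_bij) /eqP.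
by rewrite (negbTE (mulX_neq1 _)).
Qed.

Lemma Nmod_iso_scalar {t lam al t' mu be : C} {f0 f1 : {linear {poly C} -> {poly C}}} :
  bijective f0 ->
  (forall b v, (f0 (Nact sq t lam al b v).1, f1 (Nact sq t lam al b v).2) =
               Nact sq t' mu be b (f0 v.1, f1 v.2)) ->
  exists2 k : C, k != 0 & f0 =1 *:%R k /\ f1 =1 *:%R k.
Proof.
move=> [g _ f0K] H.
have G0 p q : (f0 ('X * q), f1 p) = ('X * f1 q, f0 p).
  by have := H (TG 0) (p, q); rewrite !NactG0.
have f10 p : f1 p = f0 p by case: (G0 p 0).
have f0X q : f0 ('X * q) = 'X * f0 q by case: (G0 0 q) => -> _; rewrite f10.
have f0E := linear_commX_mul1 f0X.
have : f0 1 \is a GRing.unit.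
  by apply/unitrPr; exists (g 1); rewrite mulrC -f0E f0K.
rewrite poly_unitE => /andP[/size_poly1P[k k0 f01] _].
have f0Z p : f0 p = k *: p by rewrite f0E f01 mulrC mul_polyC.
by exists k => //; split=> p; rewrite ?f10 f0Z.
Qed.

Lemma Nmod_iso_Nact_eq (t lam al t' mu be : C) :
  TIso (Nmod sq t lam al) (Nmod sq t' mu be) ->
  forall b v, Nact sq t lam al b v = Nact sq t' mu be b v.
Proof.
move=> [f0 [f1 [f0_bij _ H]]] b [p q].
have [k k0 [f0Z f1Z]] := Nmod_iso_scalar f0_bij H.
have := H b (p, q); rewrite /= !f0Z !f1Z NactZ.
move: (Nact _ _ _ _ b _) (Nact _ _ _ _ b _) => [p1 q1] [p2 q2] /=.
by case=> /(scalerI k0) -> /(scalerI k0) ->.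
Qed.

Hypothesis sq_sqr : forall z : C, sq z ^+ 2 = z.

Lemma sq_eq0 (z : C) : (sq z == 0) = (z == 0).
Proof. by rewrite -{2}(sq_sqr z) sqrf_eq0. Qed.

Lemma Nact_eq_params {t lam al t' mu be : C} :
  t = 1 \/ t = -1 -> t' = 1 \/ t' = -1 -> mu != 0 ->
  (forall b v, Nact sq t lam al b v = Nact sq t' mu be b v) ->
  [/\ lam = mu, al = be & t = t'].
Proof.
move=> ht ht' mu0 eqN.
have t'0 : t' != 0 by case: ht' => ->; rewrite ?oppr_eq0 oner_eq0.
have s'0 : sq mu != 0 by rewrite sq_eq0.
have ts : t * sq lam = t' * sq mu.
  have := congr1 snd (eqN (TG 1) (1, 0)).
  by rewrite !NactG1 /= !shift1 !alg_polyC => /polyC_inj.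
have al_be : al = be.
  have := congr1 fst (eqN (TG 1) (0, 1)); rewrite !NactG1 /= !shift1 !mulr1 ts.
  by move/(scalerI _)/addrI/polyC_inj; apply; rewrite oppr_eq0 mulf_neq0.
have lam_mu : lam = mu.
  rewrite -(sq_sqr lam) -(sq_sqr mu) -[LHS]mul1r -[RHS]mul1r.
  by rewrite -{1}(sign_sqr ht) -(sign_sqr ht') -!exprMn ts.
by split=> //; move: ts; rewrite lam_mu => /(mulIf s'0).
Qed.

End Nmodule.

Theorem theorem2p11 (R : realType) (sq : R[i] -> R[i])
    (hsq : forall z : R[i], sq z ^+ 2 = z)
    (lam mu al be t t' : R[i]) (hlam : lam != 0) (hmu : mu != 0)
    (ht : t = 1 \/ t = -1) (ht' : t' = 1 \/ t' = -1) :
  (forall (mu' be' : R[i]), mu' != 0 ->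
      ~ TIso (Pi (Nmod sq t lam al)) (Nmod sq t' mu' be')) /\
  (TIso (Nmod sq t lam al) (Nmod sq t' mu be) <->
      [/\ lam = mu, al = be & t = t']).
Proof.
split; first by move=> mu' be' _; apply: Pi_Nmod_not_iso.
split; first by move/Nmod_iso_Nact_eq; exact: (Nact_eq_params hsq ht ht' hmu).
by case=> <- <- <-; apply: TIso_refl.
Qed.
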